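(* Let $d\ge0$ and $n>d$ be integers, and let $T_1\subset\{1,\dots,n\}$ be such that $\{T_1\}\in L(n,d)$. Then the poset ideal $\mathcal{I}_{n,d}(\{T_1\})$ is isomorphic as a poset to $L(n-|T_1|,\,d-|T_1|)$.
   Context: For a finite set $X$ let $\operatorname{codim}_d(X)=d+1-|X|$. For a finite collection $\{T_1,\dots,T_l\}$ of pairwise distinct finite sets put $\rho_d(\{T_1,\dots,T_l\})=\sum_{i=1}^l\operatorname{codim}_d(T_i)$ (with $\rho_d(\emptyset)=0$) and $D_d(\{T_1,\dots,T_l\})=\operatorname{codim}_d(T_1\cap\cdots\cap T_l)-\rho_d(\{T_1,\dots,T_l\})$. For integers $d\ge0$, $n>d$, $L(n,d)$ is the set of all collections $T$ of subsets of $\{1,\dots,n\}$ such that (i) $D_d(T')>0$ for every $T'\subset T$ with $|T'|>1$, and (ii) $0\le|T_i|\le d$ for every $T_i\in T$ (so $L(n,0)=\{\emptyset,\{\emptyset\}\}$). It is partially ordered by: $T<T'$ iff $\rho_d(T)<\rho_d(T')$ and for every $T_i\in T$ there exists $T'_j\in T'$ with $T'_j\subset T_i$; $T\le T'$ means $T<T'$ or $T=T'$. For $T\in L(n,d)$, $\mathcal{I}_{n,d}(T)=\{S\in L(n,d): S\le T\}$ with the induced order. *)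

From mathcomp Require Import all_boot all_order all_algebra.
Set Implicit Arguments. Unset Strict Implicit. Unset Printing Implicit Defensive.
Import Order.TTheory GRing.Theory Num.Theory.
Local Open Scope ring_scope.

(* The ground set {1,...,n} is modelled by 'I_n; collections of subsets
   are elements of {set {set 'I_n}}. *)

Definition codim (n d : nat) (X : {set 'I_n}) : int := (d.+1)%:Z - (#|X|)%:Z.

Definition rho (n d : nat) (T : {set {set 'I_n}}) : int :=
  \sum_(X in T) codim d X.

Definition Dd (n d : nat) (T : {set {set 'I_n}}) : int :=
  codim d (\bigcap_(X in T) X) - rho d T.

Definition inL (n d : nat) (T : {set {set 'I_n}}) : Prop :=
  (forall T' : {set {set 'I_n}}, T' \subset T -> (1 < #|T'|)%N -> 0 < Dd d T')
  /\ (forall X, X \in T -> (#|X| <= d)%N).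

Definition Llt (n d : nat) (T T' : {set {set 'I_n}}) : Prop :=
  rho d T < rho d T' /\
  (forall X, X \in T -> exists2 Y, Y \in T' & Y \subset X).

Definition Lle (n d : nat) (T T' : {set {set 'I_n}}) : Prop :=
  Llt d T T' \/ T = T'.

Definition inIdeal (n d : nat) (T S : {set {set 'I_n}}) : Prop :=
  inL d S /\ Lle d S T.

Definition poset_iso (n m : nat)
  (P : {set {set 'I_n}} -> Prop) (leP : {set {set 'I_n}} -> {set {set 'I_n}} -> Prop)
  (Q : {set {set 'I_m}} -> Prop) (leQ : {set {set 'I_m}} -> {set {set 'I_m}} -> Prop)
  (f : {set {set 'I_n}} -> {set {set 'I_m}}) : Prop :=
  [/\ forall S, P S -> Q (f S),
      forall S S', P S -> P S' -> f S = f S' -> S = S',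
      forall R, Q R -> exists2 S, P S & f S = R
    & forall S S', P S -> P S' -> (leP S S' <-> leQ (f S) (f S'))].

From mathcomp Require Import all_boot all_order all_algebra.
From mathcomp Require Import zify.
Import Order.TTheory GRing.Theory Num.Theory.
Set Implicit Arguments. Unset Strict Implicit. Unset Printing Implicit Defensive.

(* Every member of a collection below {T1} contains T1.  Enumerating the
   complement of T1 by h : 'I_(n - |T1|) -> 'I_n, the map Y |-> T1 ∪ h(Y) is a
   bijection from subsets of 'I_(n - |T1|) onto supersets of T1 which preserves
   inclusion and intersections and lowers the cardinality by |T1|; hence it
   turns codim_(d - |T1|) into codim_d.  Applied memberwise it identifies
   L(n - |T1|, d - |T1|) with the collections below {T1}, since {T1} is the image
   of {∅}, the greatest element of L(n - |T1|, d - |T1|). *)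

Lemma enum_setC (n : nat) (T1 : {set 'I_n}) :
  exists h : 'I_(n - #|T1|) -> 'I_n,
    [/\ injective h, forall i, h i \notin T1
      & forall x, x \notin T1 -> exists i, h i = x].
Proof.
have cardC : (n - #|T1|)%N = #|~: T1| by rewrite [#|~: T1|]cardsCs setCK card_ord.
exists (fun i => enum_val (cast_ord cardC i)); split.
- by move=> i j /enum_val_inj /cast_ord_inj.
- by move=> i; have := enum_valP (cast_ord cardC i); rewrite inE.
- move=> x xT; have xC : x \in ~: T1 by rewrite inE.
  exists (cast_ord (esym cardC) (enum_rank_in xC x)).
  by rewrite cast_ordKV enum_rankK_in.
Qed.

Lemma rho_lt_set0 (m e : nat) (R : {set {set 'I_m}}) :
  inL e R -> R != [set set0] -> (rho e R < rho e [set set0 : {set 'I_m}])%R.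
Proof.
case=> LR _ R_neq; rewrite [rho e [set _]]/rho big_set1 /codim cards0 subr0.
have [R_gt1 | ] := ltnP 1 #|R|.
  by have := LR R (subxx R) R_gt1; rewrite /Dd /codim; lia.
rewrite leq_eqVlt ltnS leqn0 => /orP[/cards1P[X RX] | /eqP/cards0_eq ->].
  have : X != set0 by apply: contraNneq R_neq => X0; rewrite RX X0.
  by rewrite RX -card_gt0 /rho big_set1 /codim; lia.
by rewrite /rho big_set0.
Qed.

Lemma Lle_set0 (m e : nat) (R : {set {set 'I_m}}) :
  inL e R -> Lle e R [set set0].
Proof.
move=> LR; have [-> | R_neq] := eqVneq R [set set0]; first by right.
left; split; first exact: rho_lt_set0.
by move=> X _; exists set0; rewrite ?set11 ?sub0set.
Qed.

Lemma inIdeal_set1_sub (n d : nat) (T1 : {set 'I_n}) (S : {set {set 'I_n}}) :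
  inIdeal d [set T1] S -> forall X, X \in S -> T1 \subset X.
Proof.
case=> _ [[_ S_below] | ->] X XS; last by rewrite (set1P XS).
by have [Y /set1P ->] := S_below X XS.
Qed.

Section Extension.

Variables (n m : nat) (T1 : {set 'I_n}) (h : 'I_m -> 'I_n).
Hypothesis h_inj : injective h.
Hypothesis h_notin : forall i, h i \notin T1.
Hypothesis h_onto : forall x, x \notin T1 -> exists i, h i = x.

Definition extend (Y : {set 'I_m}) : {set 'I_n} := T1 :|: h @: Y.
Definition extendS (R : {set {set 'I_m}}) : {set {set 'I_n}} := extend @: R.
Definition restrictS (S : {set {set 'I_n}}) : {set {set 'I_m}} :=
  (fun X : {set 'I_n} => h @^-1: X) @: S.

Lemma mem_extend (Y : {set 'I_m}) i : (h i \in extend Y) = (i \in Y).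
Proof. by rewrite !inE (negbTE (h_notin i)) (mem_imset _ _ h_inj). Qed.

Lemma extendK (Y : {set 'I_m}) : h @^-1: extend Y = Y.
Proof. by apply/setP=> i; rewrite inE mem_extend. Qed.

Lemma extend_inj : injective extend.
Proof. by move=> Y Y' eqY; rewrite -(extendK Y) -(extendK Y') eqY. Qed.

Lemma extend_preimset (X : {set 'I_n}) : T1 \subset X -> extend (h @^-1: X) = X.
Proof.
move=> T1X; apply/setP=> x; have [xT | xT] := boolP (x \in T1).
  by rewrite !inE xT (subsetP T1X).
by have [i <-] := h_onto xT; rewrite mem_extend inE.
Qed.

Lemma subset_extend (Y Y' : {set 'I_m}) :
  (extend Y \subset extend Y') = (Y \subset Y').
Proof.
apply/idP/idP => [sYY' | sYY']; last exact/setUS/imsetS.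
by rewrite -(extendK Y) -(extendK Y') preimsetS.
Qed.

Lemma card_extend (Y : {set 'I_m}) : #|extend Y| = (#|T1| + #|Y|)%N.
Proof.
have disj : [disjoint T1 & h @: Y].
  apply/pred0P=> x /=; apply/andP=> [[xT /imsetP[i _ xE]]].
  by move: xT; rewrite xE (negbTE (h_notin i)).
by rewrite cardsU disjoint_setI0 // cards0 subn0 card_imset.
Qed.

Lemma codim_extend (d : nat) (Y : {set 'I_m}) : (#|T1| <= d)%N ->
  codim d (extend Y) = codim (d - #|T1|) Y.
Proof. by move=> T1d; rewrite /codim card_extend; lia. Qed.

Lemma bigcap_extend (R : {set {set 'I_m}}) :
  \bigcap_(X in extendS R) X = extend (\bigcap_(Y in R) Y).
Proof.
apply/setP=> x; have [xT | xT] := boolP (x \in T1).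
  by rewrite [RHS]inE xT; apply/bigcapP=> _ /imsetP[Y _ ->]; rewrite inE xT.
have [i <-] := h_onto xT; rewrite mem_extend.
apply/bigcapP/bigcapP => [capR Y YR | capR _ /imsetP[Y YR ->]].
  by rewrite -mem_extend; apply/capR/imset_f.
by rewrite mem_extend capR.
Qed.

Lemma card_extendS (R : {set {set 'I_m}}) : #|extendS R| = #|R|.
Proof. exact/card_imset/extend_inj. Qed.

Lemma extendS_inj : injective extendS.
Proof. exact/imset_inj/extend_inj. Qed.

Lemma extendSK (R : {set {set 'I_m}}) : restrictS (extendS R) = R.
Proof.
rewrite /restrictS /extendS -imset_comp (eq_imset (g := id)) ?imset_id //.
exact: extendK.
Qed.

Lemma restrictSK (S : {set {set 'I_n}}) :
  (forall X, X \in S -> T1 \subset X) -> extendS (restrictS S) = S.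
Proof.
move=> T1S; rewrite /restrictS /extendS -imset_comp.
by rewrite (eq_in_imset (g := id)) ?imset_id // => X /T1S /extend_preimset.
Qed.

Lemma extendS_set0 : extendS [set set0] = [set T1].
Proof. by rewrite /extendS imset_set1 /extend imset0 setU0. Qed.

Lemma subset_extendSP (R : {set {set 'I_m}}) (S : {set {set 'I_n}}) :
  reflect (exists2 R' : {set {set 'I_m}}, R' \subset R & S = extendS R')
          (S \subset extendS R).
Proof.
apply: (iffP idP) => [sSR | [R' sR'R ->]]; last exact: imsetS.
exists (restrictS S).
  apply/subsetP=> _ /imsetP[X /(subsetP sSR) /imsetP[Y YR ->] ->].
  by rewrite extendK.
rewrite restrictSK // => X /(subsetP sSR) /imsetP[Y _ ->]; exact: subsetUl.
Qed.

Section Codimension.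

Variable d : nat.
Hypothesis T1_le_d : (#|T1| <= d)%N.

Lemma rho_extendS (R : {set {set 'I_m}}) :
  rho d (extendS R) = rho (d - #|T1|) R.
Proof.
rewrite /rho big_imset /=; last by move=> ? ? _ _; apply: extend_inj.
by apply: eq_bigr => Y _; rewrite codim_extend.
Qed.

Lemma Dd_extendS (R : {set {set 'I_m}}) :
  Dd d (extendS R) = Dd (d - #|T1|) R.
Proof. by rewrite /Dd bigcap_extend codim_extend // rho_extendS. Qed.

Lemma inL_extendS (R : {set {set 'I_m}}) :
  inL d (extendS R) <-> inL (d - #|T1|) R.
Proof.
split=> [[DR cardR] | [DR cardR]]; split.
- move=> R' sR'R R'_gt1; rewrite -Dd_extendS.
  by apply: DR; rewrite ?imsetS ?card_extendS.
- by move=> Y YR; have := cardR _ (imset_f extend YR); rewrite card_extend; lia.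
- move=> _ /subset_extendSP[R' sR'R ->]; rewrite card_extendS Dd_extendS.
  exact: DR.
- by move=> _ /imsetP[Y YR ->]; rewrite card_extend; have := cardR _ YR; lia.
Qed.

Lemma Lle_extendS (R R' : {set {set 'I_m}}) :
  Lle d (extendS R) (extendS R') <-> Lle (d - #|T1|) R R'.
Proof.
rewrite /Lle /Llt !rho_extendS.
split=> [[[lt_rho below] | /extendS_inj ->] | [[lt_rho below] | ->]];
  [left | by right | left | by right].
- split=> // Y YR; have [_ /imsetP[Y' Y'R' ->]] := below _ (imset_f extend YR).
  by rewrite subset_extend; exists Y'.
- split=> // _ /imsetP[Y YR ->]; have [Y' Y'R' sY'Y] := below _ YR.
  by exists (extend Y'); rewrite ?imset_f ?subset_extend.
Qed.

Lemma inIdeal_extendS (R : {set {set 'I_m}}) :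
  inIdeal d [set T1] (extendS R) <-> inL (d - #|T1|) R.
Proof.
rewrite /inIdeal inL_extendS -extendS_set0 Lle_extendS.
by split=> [[] // | LR]; split; last exact: Lle_set0.
Qed.

End Codimension.

End Extension.

Theorem lemma3p2 (n d : nat) (T1 : {set 'I_n}) :
  (d < n)%N -> inL d [set T1] ->
  exists f : {set {set 'I_n}} -> {set {set 'I_(n - #|T1|)}},
    poset_iso (inIdeal d [set T1]) (@Lle n d)
              (@inL (n - #|T1|) (d - #|T1|)) (@Lle (n - #|T1|) (d - #|T1|)) f.
Proof.
move=> _ [_ card_le]; have T1_le_d := card_le T1 (set11 T1).
have [h [h_inj h_notin h_onto]] := enum_setC T1.
have extendS_res S : inIdeal d [set T1] S -> extendS T1 h (restrictS h S) = S.
  by move/inIdeal_set1_sub; apply: restrictSK.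
exists (restrictS h); split.
- move=> S IS; apply/(inIdeal_extendS h_inj h_notin h_onto T1_le_d).
  by rewrite extendS_res.
- by move=> S S' IS IS' eqS; rewrite -(extendS_res S) // -(extendS_res S') // eqS.
- move=> R LR; exists (extendS T1 h R); last exact: extendSK.
  exact/(inIdeal_extendS h_inj h_notin h_onto T1_le_d).
- move=> S S' IS IS'.
  by rewrite -(Lle_extendS h_inj h_notin T1_le_d) !extendS_res.
Qed.
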